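(* Let $S$ be an inverse semigroup that is a separately Scott-continuous mirror semigroup, with semilattice of idempotents $\Sigma$. Then for all $s,t\in S$, $s \ll t$ if and only if $s\leqslant t$ and $\sigma(s) \prec\!\!\!\prec \sigma(t)$.
   Context: An inverse semigroup is a semigroup $S$ in which every $s$ has a unique $s^*$ with $ss^*s=s$ and $s^*ss^*=s^*$. $\Sigma=\Sigma(S)$ is the set of idempotents. The intrinsic order is $s\leqslant t$ iff $s=t\epsilon$ for some idempotent $\epsilon$. A subset is directed if nonempty and any two elements have an upper bound in it. $S$ is a mirror semigroup if every directed subset of $\Sigma$ having a supremum in $(\Sigma,\leqslant)$ also has a supremum in $(S,\leqslant)$. $S$ is separately Scott-continuous if for every directed $D\subseteq S$ with a supremum $\bigvee D$ in $S$ and every $s\in S$, $\bigvee(Ds)$ exists in $S$ and equals $(\bigvee D)s$. The source map is $\sigma(s)=s^*s$. In a poset, $x$ is way-below $y$ if for every directed subset $D$ that has a supremum with $y\leqslant \sup D$, there is $d\in D$ with $x\leqslant d$. $\ll$ denotes the way-below relation of the poset $(S,\leqslant)$ and $\prec\!\!\!\prec$ the way-below relation of the poset $(\Sigma,\leqslant)$. *)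

Set Implicit Arguments.
Section InvSemigroup.
Variable T : Type.
Variable mul : T -> T -> T.
Variable inv : T -> T.

Definition inverse_semigroup : Prop :=
  (forall a b c, mul a (mul b c) = mul (mul a b) c) /\
  (forall s, mul (mul s (inv s)) s = s /\ mul (mul (inv s) s) (inv s) = inv s) /\
  (forall s x, mul (mul s x) s = s -> mul (mul x s) x = x -> x = inv s).

Definition idem (e : T) : Prop := mul e e = e.

Definition allT (x : T) : Prop := True.

Definition ile (s t : T) : Prop := exists e, idem e /\ s = mul t e.

Definition src (s : T) : T := mul (inv s) s.

Definition directed_in (P : T -> Prop) (D : T -> Prop) : Prop :=
  (exists d, D d) /\ (forall d, D d -> P d) /\
  (forall a b, D a -> D b -> exists c, D c /\ ile a c /\ ile b c).

Definition is_sup_in (P : T -> Prop) (D : T -> Prop) (z : T) : Prop :=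
  P z /\ (forall d, D d -> ile d z) /\
  (forall y, P y -> (forall d, D d -> ile d y) -> ile z y).

Definition way_below_in (P : T -> Prop) (x y : T) : Prop :=
  forall D z, directed_in P D -> is_sup_in P D z -> ile y z ->
    exists d, D d /\ ile x d.

Definition mirror : Prop :=
  forall D, directed_in idem D -> (exists z, is_sup_in idem D z) ->
    exists w, is_sup_in allT D w.

Definition rtrans (D : T -> Prop) (s : T) : T -> Prop :=
  fun x => exists d, D d /\ x = mul d s.

Definition sep_scott_continuous : Prop :=
  forall D z, directed_in allT D -> is_sup_in allT D z ->
    forall s, is_sup_in allT (rtrans D s) (mul z s).

End InvSemigroup.

(* Forward direction: s <= t is witnessed by the directed set {t}.  If D is a
   directed set of idempotents with supremum e >= σ(t) in Σ, the mirror property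
   makes e its supremum in S, and then t = t e is the supremum of t D, by Scott
   continuity of left translation (right translation conjugated by inversion).
   So s <= t d for some d in D, whence σ(s) <= σ(t d) <= d.
   Backward direction: if D is directed with supremum z >= t, Scott continuity
   applied to D^* and z gives σ(z) = sup { d^* z } = sup σ(D).  Hence
   σ(s) <= σ(d) for some d in D, and as s and d lie below z,
   s = z σ(s) <= z σ(d) = d. *)

From Pilot Require Import Defs.
From Stdlib Require Import Setoid.

Set Implicit Arguments.

Section InverseSemigroup.

Variables (T : Type) (mul : T -> T -> T) (inv : T -> T).
Hypothesis HS : inverse_semigroup mul inv.

Local Infix "·" := mul (at level 45, right associativity).
Local Infix "≤" := (ile mul) (at level 70).
Local Notation σ := (src mul inv).
Local Notation Σ := (idem mul).
Local Notation allT := (@Defs.allT T).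

Lemma mulA a b c : a · (b · c) = (a · b) · c.
Proof. apply HS. Qed.

(* Products are kept right-associated; lemmas with suffix r take an extra
   right factor y so that they still match after reassociation. *)
Local Ltac reassoc := repeat rewrite <- mulA.
Local Ltac reassoc_in H := repeat rewrite <- mulA in H.

Lemma mul_inv_mul s : s · inv s · s = s.
Proof. rewrite mulA. apply (proj1 (proj2 HS) s). Qed.

Lemma inv_mul_inv s : inv s · s · inv s = inv s.
Proof. rewrite mulA. apply (proj1 (proj2 HS) s). Qed.

Lemma inv_unique s x : s · x · s = s -> x · s · x = x -> x = inv s.
Proof. rewrite !mulA. apply (proj2 (proj2 HS)). Qed.

Lemma mul_inv_mulr s y : s · inv s · s · y = s · y.
Proof. now rewrite (mulA (inv s)), (mulA s), mul_inv_mul. Qed.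

Lemma inv_mul_invr s y : inv s · s · inv s · y = inv s · y.
Proof. now rewrite (mulA s), (mulA (inv s)), inv_mul_inv. Qed.

Lemma inv_inv s : inv (inv s) = s.
Proof. symmetry. apply inv_unique; [apply inv_mul_inv | apply mul_inv_mul]. Qed.

Lemma idem_inv e : Σ e -> inv e = e.
Proof. intro He. symmetry. apply inv_unique; now rewrite He, He. Qed.

Lemma idem_mulr e y : Σ e -> e · e · y = e · y.
Proof. intro He. now rewrite mulA, He. Qed.

(* For idempotents e, f the element f (ef)^* e is an inverse of ef, hence equal
   to (ef)^*, and it is idempotent; so ef = (ef)^** is idempotent too. *)
Lemma idem_mul e f : Σ e -> Σ f -> Σ (e · f).
Proof.
  intros He Hf.
  set (x := inv (e · f)).
  assert (Hx1 : e · f · x · e · f = e · f).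
  { pose proof (mul_inv_mul (e · f)) as H. fold x in H. now reassoc_in H. }
  assert (Hx2 : forall y, x · e · f · x · y = x · y).
  { intro y. pose proof (inv_mul_invr (e · f) y) as H. fold x in H. now reassoc_in H. }
  assert (Hfxe : f · x · e = x).
  { apply inv_unique; reassoc; rewrite ?(idem_mulr _ He), ?(idem_mulr _ Hf).
    - exact Hx1.
    - now rewrite Hx2. }
  assert (Hx : Σ x).
  { unfold idem. rewrite <- Hfxe. reassoc. now rewrite Hx2. }
  unfold x in Hx. now rewrite <- (inv_inv (e · f)), (idem_inv Hx).
Qed.

(* fe is an inverse of the idempotent ef, which is its own inverse. *)
Lemma idem_comm e f : Σ e -> Σ f -> e · f = f · e.
Proof.
  intros He Hf.
  assert (Hef := idem_mul He Hf). assert (Hfe := idem_mul Hf He).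
  rewrite <- (idem_inv Hef) at 1. symmetry.
  unfold idem in Hef, Hfe. reassoc_in Hef. reassoc_in Hfe.
  apply inv_unique; reassoc; now rewrite ?(idem_mulr _ He), ?(idem_mulr _ Hf).
Qed.

Lemma src_idem s : Σ (σ s).
Proof. unfold idem, src. reassoc. now rewrite inv_mul_invr. Qed.

Lemma mul_inv_idem s : Σ (s · inv s).
Proof. unfold idem. reassoc. now rewrite mul_inv_mulr. Qed.

Lemma src_comm e t : Σ e -> e · inv t · t = inv t · t · e.
Proof.
  intro He. pose proof (idem_comm He (src_idem t)) as H. unfold src in H.
  now reassoc_in H.
Qed.

Lemma src_commr e t y : Σ e -> e · inv t · t · y = inv t · t · e · y.
Proof. intro He. rewrite (mulA (inv t)), (mulA e), (src_comm t He). now reassoc. Qed.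

Lemma inv_mul a b : inv (a · b) = inv b · inv a.
Proof.
  symmetry. apply inv_unique; reassoc.
  - pose proof (src_commr a b (mul_inv_idem b)) as H. reassoc_in H.
    now rewrite H, mul_inv_mulr, mul_inv_mul.
  - pose proof (src_commr a (inv a) (mul_inv_idem b)) as H. reassoc_in H.
    now rewrite <- H, inv_mul_invr, inv_mul_inv.
Qed.

Lemma ile_refl t : t ≤ t.
Proof. exists (σ t). split; [apply src_idem | symmetry; apply mul_inv_mul]. Qed.

Lemma ile_trans a b c : a ≤ b -> b ≤ c -> a ≤ c.
Proof.
  intros [e [He ->]] [f [Hf ->]]. exists (f · e).
  split; [now apply idem_mul | now rewrite mulA].
Qed.

Lemma ile_antisym a b : a ≤ b -> b ≤ a -> a = b.
Proof.
  intros [e [He Ha]] [f [Hf Hb]].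
  assert (Hafe : a = a · f · e) by (rewrite Ha at 1; rewrite Hb; now reassoc).
  assert (Haf : a · f = a).
  { rewrite Hafe at 1. reassoc. rewrite (idem_comm He Hf), (idem_mulr _ Hf).
    now symmetry. }
  now rewrite Hb, Haf.
Qed.

Lemma ile_mul2l t a b : a ≤ b -> t · a ≤ t · b.
Proof. intros [e [He ->]]. exists e. split; [exact He | apply mulA]. Qed.

Lemma ile_inv a b : a ≤ b -> inv a ≤ inv b.
Proof.
  intros [e [He ->]]. exists (b · e · inv b). split.
  - unfold idem. reassoc.
    now rewrite (src_commr b (e · inv b) He), mul_inv_mulr, (idem_mulr _ He).
  - rewrite inv_mul, (idem_inv He).
    now rewrite <- (src_commr b (inv b) He), inv_mul_inv.
Qed.

Lemma ile_idem a e : a ≤ e -> Σ e -> Σ a.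
Proof. intros [f [Hf ->]] He. now apply idem_mul. Qed.

Lemma ile_eq_mul_src a b : a ≤ b -> a = b · σ a.
Proof.
  intros [e [He ->]]. unfold src. rewrite inv_mul, (idem_inv He). reassoc.
  now rewrite (src_commr b e He), mul_inv_mulr, He.
Qed.

Lemma src_ile a b : a ≤ b -> σ a ≤ σ b.
Proof.
  intros [e [He ->]]. exists e. split; [exact He |].
  unfold src. rewrite inv_mul, (idem_inv He). reassoc.
  now rewrite (src_commr b e He), He.
Qed.

Lemma src_mul_idem_ile x e : Σ e -> σ (x · e) ≤ e.
Proof.
  intro He. exists (σ x · e). split.
  - exact (idem_mul (src_idem x) He).
  - unfold src. rewrite inv_mul, (idem_inv He). now reassoc.
Qed.

Lemma inv_mul_of_ile d z : d ≤ z -> inv d · z = σ d.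
Proof.
  intros [e [He ->]]. unfold src. rewrite inv_mul, (idem_inv He). reassoc.
  now rewrite (src_commr z e He), (src_comm z He), He.
Qed.

Lemma mul_idem_of_src_ile t e : Σ e -> σ t ≤ e -> t · e = t.
Proof.
  intros He [f [Hf H]]. unfold src in H.
  assert (Ht : t = t · e · f) by (rewrite <- H; symmetry; apply mul_inv_mul).
  rewrite Ht at 1. reassoc. rewrite (idem_comm Hf He), (idem_mulr _ He).
  now symmetry.
Qed.

Lemma ile_of_src_ile a b z : a ≤ z -> b ≤ z -> σ a ≤ σ b -> a ≤ b.
Proof.
  intros Haz Hbz [f [Hf H]]. exists f. split; [exact Hf |].
  now rewrite (ile_eq_mul_src Haz), H, mulA, <- (ile_eq_mul_src Hbz).
Qed.

Definition image (f : T -> T) (D : T -> Prop) : T -> Prop :=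
  fun x => exists d, D d /\ x = f d.

Lemma is_sup_ext P D D' z :
  (forall x, D x <-> D' x) -> is_sup_in mul P D z -> is_sup_in mul P D' z.
Proof.
  intros E [Hz [Hub Hleast]]. split; [exact Hz | split].
  - intros d Hd. now apply Hub, E.
  - intros y Hy Hu. apply Hleast; [exact Hy |]. intros d Hd. now apply Hu, E.
Qed.

Lemma is_sup_restrict P D z :
  is_sup_in mul allT D z -> P z -> is_sup_in mul P D z.
Proof.
  intros [_ [Hub Hleast]] Hz. split; [exact Hz | split; [exact Hub |]].
  intros y _. now apply Hleast.
Qed.

Lemma directed_allT P D : directed_in mul P D -> directed_in mul allT D.
Proof. intros [Hne [_ Hdir]]. now split; [| split]. Qed.

Lemma directed_image P Q f D :
  (forall a b, a ≤ b -> f a ≤ f b) -> (forall d, D d -> P (f d)) ->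
  directed_in mul Q D -> directed_in mul P (image f D).
Proof.
  intros Hf HP [[d0 Hd0] [_ Hdir]]. split; [exists (f d0), d0; now split | split].
  - intros x [d [Hd ->]]. now apply HP.
  - intros a b [d1 [Hd1 ->]] [d2 [Hd2 ->]].
    destruct (Hdir d1 d2 Hd1 Hd2) as [c [Hc [H1 H2]]].
    exists (f c). split; [exists c; now split | split; now apply Hf].
Qed.

Lemma is_sup_image_inv D z :
  is_sup_in mul allT D z -> is_sup_in mul allT (image inv D) (inv z).
Proof.
  intros [_ [Hub Hleast]]. split; [exact I | split].
  - intros x [d [Hd ->]]. now apply ile_inv, Hub.
  - intros y _ Hu. rewrite <- (inv_inv y). apply ile_inv, Hleast; [exact I |].
    intros d Hd. rewrite <- (inv_inv d). apply ile_inv, Hu. now exists d.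
Qed.

Lemma way_below_ile P s t : P t -> way_below_in mul P s t -> s ≤ t.
Proof.
  intros Ht Hwb.
  destruct (Hwb (fun x => x = t) t) as [d [-> Hsd]]; [| | apply ile_refl | exact Hsd].
  - split; [now exists t | split; [now intros d -> |]].
    intros a b -> ->. exists t. split; [reflexivity | split; apply ile_refl].
  - split; [exact Ht | split; [intros d ->; apply ile_refl |]].
    intros y _ Hu. now apply Hu.
Qed.

(* In a mirror semigroup the supremum taken in S of a directed set of
   idempotents is idempotent, hence coincides with its supremum in Σ. *)
Lemma is_sup_mirror D z :
  mirror mul -> directed_in mul Σ D -> is_sup_in mul Σ D z ->
  is_sup_in mul allT D z.
Proof.
  intros Hmirror HD Hz. destruct (Hmirror D HD (ex_intro _ z Hz)) as [w Hw].
  assert (Hwz : w ≤ z) by (apply Hw; [exact I | apply Hz]).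
  assert (Hzw : z ≤ w) by (apply Hz; [exact (ile_idem Hwz (proj1 Hz)) | apply Hw]).
  now rewrite (ile_antisym Hzw Hwz).
Qed.

Lemma directed_image_inv D :
  directed_in mul allT D -> directed_in mul allT (image inv D).
Proof. apply directed_image; [exact ile_inv | now intros]. Qed.

(* Left translation is Scott-continuous too: conjugate right translation by
   inversion, an order automorphism. *)
Lemma is_sup_image_mull D z s :
  sep_scott_continuous mul -> directed_in mul allT D -> is_sup_in mul allT D z ->
  is_sup_in mul allT (image (mul s) D) (s · z).
Proof.
  intros Hscott HD Hz.
  pose proof (Hscott _ _ (directed_image_inv HD) (is_sup_image_inv Hz) (inv s)) as H.
  apply is_sup_image_inv in H. rewrite inv_mul, !inv_inv in H.
  revert H. apply is_sup_ext. intro x. split.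
  - intros [y [[d' [[d [Hd ->]] ->]] ->]]. exists d.
    split; [exact Hd | now rewrite inv_mul, !inv_inv].
  - intros [d [Hd ->]]. exists (inv d · inv s).
    split; [exists (inv d); split; [now exists d | reflexivity] |].
    now rewrite inv_mul, !inv_inv.
Qed.

Lemma is_sup_image_src D z :
  sep_scott_continuous mul -> directed_in mul allT D -> is_sup_in mul allT D z ->
  is_sup_in mul allT (image σ D) (σ z).
Proof.
  intros Hscott HD Hz.
  pose proof (Hscott _ _ (directed_image_inv HD) (is_sup_image_inv Hz) z) as H.
  revert H. apply is_sup_ext. intro x. split.
  - intros [y [[d [Hd ->]] ->]]. exists d.
    split; [exact Hd | apply inv_mul_of_ile, Hz, Hd].
  - intros [d [Hd ->]]. exists (inv d).
    split; [now exists d | symmetry; apply inv_mul_of_ile, Hz, Hd].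
Qed.

Lemma way_below_src s t :
  mirror mul -> sep_scott_continuous mul ->
  way_below_in mul allT s t -> way_below_in mul Σ (σ s) (σ t).
Proof.
  intros Hmirror Hscott Hwb D z HD Hz Htz.
  assert (HtD : is_sup_in mul allT (image (mul t) D) t).
  { rewrite <- (mul_idem_of_src_ile (proj1 Hz) Htz) at 2.
    exact (is_sup_image_mull t Hscott (directed_allT HD) (is_sup_mirror Hmirror HD Hz)). }
  assert (HtD_dir := directed_image allT (mul t) (ile_mul2l t) (fun _ _ => I) HD).
  destruct (Hwb _ _ HtD_dir HtD (ile_refl t)) as [x [[d [Hd ->]] Hsd]].
  exists d. split; [exact Hd |].
  apply ile_trans with (σ (t · d)); [now apply src_ile |].
  apply src_mul_idem_ile, HD, Hd.
Qed.

Lemma way_below_of_src s t :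
  sep_scott_continuous mul -> s ≤ t ->
  way_below_in mul Σ (σ s) (σ t) -> way_below_in mul allT s t.
Proof.
  intros Hscott Hst Hwb D z HD Hz Htz.
  destruct (Hwb (image σ D) (σ z)) as [x [[d [Hd ->]] Hsd]].
  - exact (directed_image Σ σ src_ile (fun d _ => src_idem d) HD).
  - exact (is_sup_restrict Σ (is_sup_image_src Hscott HD Hz) (src_idem z)).
  - now apply src_ile.
  - exists d. split; [exact Hd |].
    apply ile_of_src_ile with z; [now apply ile_trans with t | apply Hz, Hd | exact Hsd].
Qed.

End InverseSemigroup.

Theorem lemma4p4 (T : Type) (mul : T -> T -> T) (inv : T -> T)
  (HS : inverse_semigroup mul inv)
  (Hmirror : mirror mul)
  (Hscott : sep_scott_continuous mul) :
  forall s t : T,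
    way_below_in mul (@allT T) s t <->
    (ile mul s t /\ way_below_in mul (idem mul) (src mul inv s) (src mul inv t)).
Proof.
  intros s t. split.
  - intro Hwb. split.
    + exact (way_below_ile HS I Hwb).
    + exact (way_below_src HS Hmirror Hscott Hwb).
  - intros [Hst Hwb]. exact (way_below_of_src HS Hscott Hst Hwb).
Qed.
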